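(* Let $\mathcal{N}=(D,P)$ be a broadcast network with client $P=(Q,I,\delta)$, let $F\subseteq Q$, and let $c_0$ be a configuration. There is a fair computation starting from $c_0$ if and only if there is a configuration $c$ with $c_0\to^* c$ and $c\Rightarrow_F c$.
   Context: A broadcast network is a pair $\mathcal{N}=(D,P)$ where $D$ is a finite set of messages and $P=(Q,I,\delta)$ is a finite automaton with $\delta\subseteq Q\times\mathrm{Ops}(D)\times Q$, $\mathrm{Ops}(D)=\{!a,\ ?a: a\in D\}$. A configuration is $c\in Q^k$ for some $k$, with entries $c[i]$. For $c,c'\in Q^k$ and $a\in D$, $c\xrightarrow{a}c'$ holds if there is $i$ with $(c[i],!a,c'[i])\in\delta$, a set $R\subseteq[1..k]\setminus\{i\}$ with $(c[j],?a,c'[j])\in\delta$ for $j\in R$, and $c[j]=c'[j]$ for $j\notin R\cup\{i\}$; then $\mathrm{type}(c\xrightarrow{a}c')=R\cup\{i\}$. $\to^*$ denotes zero or more transitions. For an infinite computation $\pi=c_0\to c_1\to\cdots$, $\mathrm{Inf}(\pi)=\{i: i\in\mathrm{type}(c_j\to c_{j+1})\text{ for infinitely many } j\}$ and $\mathrm{Fin}(\pi)=\{i: c_j[i]\in F\text{ for infinitely many } j\}$; $\pi$ is fair if $\mathrm{Inf}(\pi)\subseteq\mathrm{Fin}(\pi)$. A finite computation $c_1\to c_2\to\cdots\to c_n$ with $n\ge2$ is good for $F$, written $c_1\Rightarrow_F c_n$, if every client $i$ with $i\in\mathrm{type}(c_j\to c_{j+1})$ for some $j$ satisfies $c_k[i]\in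 F$ for some $k\in[1..n]$. *)

From mathcomp Require Import all_boot.
Set Implicit Arguments. Unset Strict Implicit. Unset Printing Implicit Defensive.

Inductive op (D : Type) := Send of D | Recv of D.

Section Broadcast.
Variables (D Q : finType).
Variable delta : Q -> op D -> Q -> bool.
Variable k : nat.

Definition config := 'I_k -> Q.

(* c --a--> c' with type T = R ∪ {i} *)
Definition step_type (c : config) (a : D) (T : {set 'I_k}) (c' : config) : Prop :=
  exists i : 'I_k,
    [/\ i \in T,
        delta (c i) (Send a) (c' i),
        (forall j, j \in T -> j != i -> delta (c j) (Recv a) (c' j))
      & (forall j, j \notin T -> c j = c' j)].

Definition step (c : config) (T : {set 'I_k}) (c' : config) : Prop :=
  exists a : D, step_type c a T c'.

Definition is_comp (cs : nat -> config) (Ts : nat -> {set 'I_k}) (m : nat) : Prop :=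
  forall j, j < m -> step (cs j) (Ts j) (cs j.+1).

Definition reach (c0 c : config) : Prop :=
  exists (m : nat) (cs : nat -> config) (Ts : nat -> {set 'I_k}),
    [/\ cs 0 = c0, cs m = c & is_comp cs Ts m].

(* c1 =>_F cn : a finite computation with n >= 2 configurations (m = n-1 >= 1
   steps) such that every client participating in some transition visits F
   in some configuration of the computation. *)
Definition good (F : {set Q}) (c c' : config) : Prop :=
  exists (m : nat) (cs : nat -> config) (Ts : nat -> {set 'I_k}),
    [/\ 0 < m, cs 0 = c, cs m = c', is_comp cs Ts m
      & forall (i : 'I_k) (j : nat), j < m -> i \in Ts j ->
          exists l, l <= m /\ cs l i \in F].

Definition inf_often (P : nat -> Prop) : Prop := forall N, exists j, N <= j /\ P j.

Definition fair_comp (F : {set Q}) (cs : nat -> config) (Ts : nat -> {set 'I_k}) : Prop :=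
  (forall j, step (cs j) (Ts j) (cs j.+1)) /\
  (forall i : 'I_k, inf_often (fun j => i \in Ts j) ->
                    inf_often (fun j => cs j i \in F)).

End Broadcast.

From mathcomp Require Import all_boot zify.
From Stdlib Require Import Classical FunctionalExtensionality.

Set Implicit Arguments. Unset Strict Implicit. Unset Printing Implicit Defensive.

(* There are finitely many configurations, so a fair computation visits some c
   infinitely often. Take a visit m of c after every client that moves only
   finitely often has stopped, and a later visit n after every other client has
   passed through F again (fairness): the segment from m to n is a good cycle
   c =>_F c. Conversely, the prefix c0 ->* c followed by the good cycle repeated
   forever is fair, since a client that moves in the cycle visits F in every
   period. *)

Definition eventually (P : nat -> Prop) : Prop := exists N, forall n, N <= n -> P n.

Lemma eventually_forall (T : finType) (P : T -> nat -> Prop) :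
  (forall x, eventually (P x)) -> eventually (fun n => forall x, P x n).
Proof.
move=> evP; suff [N PN] : exists N, forall x, x \in enum T -> forall n, N <= n -> P x n.
  by exists N => n leNn x; apply: PN; rewrite ?mem_enum.
elim: (enum T) => [|y s [N PN]]; first by exists 0.
have [M PM] := evP y; exists (maxn N M) => x; rewrite inE => /predU1P[-> | xs] n.
  by rewrite geq_max => /andP[_]; apply: PM.
by rewrite geq_max => /andP[+ _]; apply: PN.
Qed.

Lemma not_inf_often (P : nat -> Prop) :
  ~ inf_often P -> eventually (fun n => ~ P n).
Proof.
move=> notP; apply: NNPP => notev; apply: notP => N.
apply: NNPP => noj; apply: notev; exists N => n leNn Pn; apply: noj; by exists n.
Qed.

Lemma inf_often_eventually (P R : nat -> Prop) :
  inf_often P -> eventually R -> inf_often (fun n => P n /\ R n).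
Proof.
move=> infP [M RM] N; have [n [+ Pn]] := infP (maxn N M).
by rewrite geq_max => /andP[leNn leMn]; exists n; split; last split; last apply: RM.
Qed.

Lemma inf_often_value (T : finType) (f : nat -> T) :
  exists x, inf_often (fun n => f n = x).
Proof.
apply: NNPP => noval.
have evP x : eventually (fun n => f n <> x).
  by apply: not_inf_often => infx; apply: noval; exists x.
by have [N PN] := eventually_forall evP; exact: (PN N (leqnn N) (f N)).
Qed.

Lemma inf_often_fun_value (T U : finType) (f : nat -> T -> U) :
  exists g, inf_often (fun n => f n = g).
Proof.
have [g infg] := inf_often_value (fun n => [ffun x => f n x]).
exists g => N; have [n [leNn fng]] := infg N; exists n; split => //.
by apply: functional_extensionality => x; rewrite -fng ffunE.
Qed.

Lemma inf_often_mod (P : nat -> Prop) (m j : nat) :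
  0 < m -> P (j %% m) -> inf_often (fun n => P (n %% m)).
Proof.
move=> m_gt0 Pj N; exists (N * m + j); rewrite modnMDl; split => //.
by rewrite (leq_trans (leq_pmulr N m_gt0)) ?leq_addr.
Qed.

Definition splice (T : Type) (m : nat) (p q : nat -> T) (n : nat) : T :=
  if n < m then p n else q (n - m).

Lemma inf_often_splice (T : Type) (P : T -> Prop) (m : nat) (p q : nat -> T) :
  inf_often (fun n => P (splice m p q n)) <-> inf_often (fun n => P (q n)).
Proof.
rewrite /splice; split=> infP N.
  have [n [leNn Pn]] := infP (N + m); exists (n - m).
  have nm : n < m = false by lia.
  by rewrite nm in Pn; split=> //; lia.
have [n [leNn Pn]] := infP N; exists (n + m); rewrite addnK.
have -> : n + m < m = false by lia.
by split=> //; lia.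
Qed.

Section Broadcast.
Variables (D Q : finType) (delta : Q -> op D -> Q -> bool) (F : {set Q}) (k : nat).
Implicit Types (c : config Q k) (cs p q : nat -> config Q k) (Ts pT qT : nat -> {set 'I_k}).

Definition inf_comp (cs : nat -> config Q k) (Ts : nat -> {set 'I_k}) : Prop :=
  forall n, step delta (cs n) (Ts n) (cs n.+1).

Lemma inf_comp_reach cs Ts n : inf_comp cs Ts -> reach delta (cs 0) (cs n).
Proof. by move=> csTs; exists n, cs, Ts; split=> // j _; apply: csTs. Qed.

Lemma inf_comp_good cs Ts m n :
    inf_comp cs Ts -> m < n ->
    (forall i j, m <= j < n -> i \in Ts j -> exists2 l, m <= l <= n & cs l i \in F) ->
  good delta F (cs m) (cs n).
Proof.
move=> csTs lt_mn visitF.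
exists (n - m), (fun j => cs (m + j)), (fun j => Ts (m + j)); split.
- by rewrite subn_gt0.
- by rewrite addn0.
- by rewrite subnKC // ltnW.
- by move=> j _; rewrite addnS; apply: csTs.
move=> i j lt_j_nm /visitF[|l /andP[le_ml le_ln] Fl]; first lia.
by exists (l - m); rewrite subnKC //; split=> //; lia.
Qed.

Lemma fair_good_cycle cs Ts :
  fair_comp delta F cs Ts -> exists2 c, reach delta (cs 0) c & good delta F c c.
Proof.
move=> [csTs fair].
have idle_or_F : eventually (fun n => forall i,
    (forall j, n <= j -> i \notin Ts j) \/ inf_often (fun j => cs j i \in F)).
  apply: eventually_forall => i.
  have [/fair infF | /not_inf_often [N idle]] := classic (inf_often (fun j => i \in Ts j)).
    by exists 0 => n _; right.
  by exists N => n leNn; left => j lenj; apply/negP; apply: idle; apply: leq_trans lenj.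
have [c recc] := inf_often_fun_value cs.
have [m [_ [csm idle_or_F_m]]] := inf_often_eventually recc idle_or_F 0.
have idle_or_seen : eventually (fun n => forall i,
    (forall j, m <= j -> i \notin Ts j) \/ exists2 l, m <= l <= n & cs l i \in F).
  apply: eventually_forall => i; case: (idle_or_F_m i) => [idle|infF].
    by exists 0 => n _; left.
  have [l [le_ml Fl]] := infF m.
  by exists l => n le_ln; right; exists l; rewrite ?le_ml.
have [n [lt_mn [csn seen]]] := inf_often_eventually recc idle_or_seen m.+1.
exists c; first by rewrite -csm; apply: inf_comp_reach csTs.
rewrite -{1}csm -csn; apply: inf_comp_good => // i j /andP[le_mj lt_jn] Tj.
case: (seen i) => [idle|//].
by rewrite (negbTE (idle j le_mj)) in Tj.
Qed.

Lemma cycle_mod cs m l : cs m = cs 0 -> l <= m -> cs (l %% m) = cs l.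
Proof.
move=> csm; rewrite leq_eqVlt => /predU1P[-> | lt_lm]; last by rewrite modn_small.
by rewrite modnn csm.
Qed.

Lemma cycle_inf_comp cs Ts m :
    0 < m -> is_comp delta cs Ts m -> cs m = cs 0 ->
  inf_comp (fun n => cs (n %% m)) (fun n => Ts (n %% m)).
Proof.
move=> m_gt0 csTs csm n; have lt_nm : n %% m < m by rewrite ltn_mod.
by rewrite -addn1 -modnDml addn1 (@cycle_mod _ _ (n %% m).+1 csm lt_nm); apply: csTs.
Qed.

Lemma splice_inf_comp p pT q qT m :
    is_comp delta p pT m -> inf_comp q qT -> p m = q 0 ->
  inf_comp (splice m p q) (splice m pT qT).
Proof.
move=> ppT qqT pmq n; rewrite /splice; case: (ltngtP n.+1 m) => [lt_n1m | lt_mn1 | n1m].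
- by apply: ppT; apply: ltnW.
- by rewrite subSn //; apply: qqT.
by subst m; rewrite subnn -pmq; apply: ppT.
Qed.

Lemma good_cycle_fair c0 c :
  reach delta c0 c -> good delta F c c ->
  exists cs Ts, cs 0 = c0 /\ fair_comp delta F cs Ts.
Proof.
move=> [m0 [p [pT [p0 pm ppT]]]] [m [q [qT [m_gt0 q0 qm qqT visitF]]]].
have qm0 : q m = q 0 by rewrite q0 qm.
pose qs n := q (n %% m); pose qTs n := qT (n %% m).
exists (splice m0 p qs), (splice m0 pT qTs).
split.
  rewrite /splice; case: posnP => [m0_0 | _]; last exact: p0.
  by rewrite /qs sub0n mod0n q0 -pm m0_0.
split.
  apply: splice_inf_comp ppT (cycle_inf_comp m_gt0 qqT qm0) _.
  by rewrite /qs mod0n pm q0.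
move=> i /(inf_often_splice (fun T : {set 'I_k} => i \in T) m0 pT qTs) infT.
apply/(inf_often_splice (fun c => c i \in F) m0 p qs).
have [j [_ Tj]] := infT 0.
have [l [le_lm Fl]] := visitF i _ (ltn_pmod j m_gt0) Tj.
apply: (inf_often_mod (P := fun n => q n i \in F) (j := l) m_gt0).
by rewrite /= (cycle_mod qm0 le_lm).
Qed.

End Broadcast.

Theorem lemma6 (D Q : finType) (I : {set Q}) (delta : Q -> op D -> Q -> bool)
    (F : {set Q}) (k : nat) (c0 : config Q k) :
  (exists (cs : nat -> config Q k) (Ts : nat -> {set 'I_k}),
      cs 0 = c0 /\ fair_comp delta F cs Ts)
  <->
  (exists c : config Q k, reach delta c0 c /\ good delta F c c).
Proof.
split=> [[cs [Ts [<- fair]]] | [c [c0c cc]]].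
  by have [c c0c cc] := fair_good_cycle fair; exists c.
exact: good_cycle_fair c0c cc.
Qed.
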